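(* Let $\mathsf V$ be a 1ESP variety and $h$ an algebraic e-generalization problem for $\mathsf V$. Then the poset of solutions $(\mathscr A(h),\sqsubseteq)$ is dually isomorphic to the poset $(\mathscr G(h),\subseteq)$.
   Context: $\mathbf F_{\mathsf V}(z)$ is the free algebra of the variety $\mathsf V$ on one generator $z$. An algebra is projective in $\mathsf V$ iff it is a retract of a free algebra of $\mathsf V$; exact if isomorphic to a finitely generated subalgebra of a finitely generated free algebra of $\mathsf V$. An algebra $\mathbf S$ is strongly projective in $\mathsf V$ if it is projective and, for every embedding $i:\mathbf S\to\mathbf P$ into a projective algebra $\mathbf P$, there is a homomorphism $j:\mathbf P\to\mathbf S$ with $j\circ i=\mathrm{id}_{\mathbf S}$; $\mathsf V$ is 1ESP if every 1-generated exact algebra in $\mathsf V$ is strongly projective. An algebraic e-generalization problem is a homomorphism $h:\mathbf F_{\mathsf V}(z)\to\prod_{k=1}^m\mathbf E_k$ with each $\mathbf E_k$ 1-generated exact and each $p_k\circ h$ surjective. A solution of $h$ is a homomorphism $g:\mathbf F_{\mathsf V}(z)\to\mathbf P$, $\mathbf P$ finitely generated projective, with $f\circ g=h$ for some homomorphism $f$. For homomorphisms with common domain, $g\sqsubseteq g'$ iff $f\circ g'=g$ for some homomorphism $f$; $(\mathscr A(h),\sqsubseteq)$ is the poset of solutions modulo $\sqsubseteq$-equivalence. $\mathscr G(h)=\{\ker(g): g\text{ a solution of }h\}$. *)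

From mathcomp Require Import all_boot.
Set Implicit Arguments.
Unset Strict Implicit.
Unset Printing Implicit Defensive.

Record signature := Signature { op_sym :> Type; arity : op_sym -> nat }.

Section UniversalAlgebra.
Variable S : signature.

Record algebra := Algebra {
  carrier :> Type;
  interp : forall f : S, ('I_(arity f) -> carrier) -> carrier }.

Inductive term (X : Type) : Type :=
  | Var (x : X)
  | App (f : S) (args : 'I_(arity f) -> term X).

Fixpoint eval (A : algebra) (X : Type) (env : X -> A) (t : term X) : A :=
  match t with
  | Var x => env x
  | App f args => @interp A f (fun i => eval env (args i))
  end.

(* A variety is given by a set of identities (equational class). *)
Definition identities := term nat -> term nat -> Prop.

(* Algebras have nonempty universes (standard convention). *)
Definition in_var (Eqs : identities) (A : algebra) : Prop :=
  inhabited A /\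
  forall s t, Eqs s t -> forall env : nat -> A, eval env s = eval env t.

Definition is_hom (A B : algebra) (h : A -> B) : Prop :=
  forall (f : S) (args : 'I_(arity f) -> A),
    h (@interp A f args) = @interp B f (fun i => h (args i)).

Definition closed_sub (A : algebra) (U : A -> Prop) : Prop :=
  forall (f : S) (args : 'I_(arity f) -> A),
    (forall i, U (args i)) -> U (@interp A f args).

Definition generated_by (A : algebra) (G : A -> Prop) : Prop :=
  forall U : A -> Prop, closed_sub U -> (forall x, G x -> U x) -> forall x, U x.

Definition finitely_generated (A : algebra) : Prop :=
  exists (n : nat) (s : 'I_n -> A), generated_by (fun x => exists i, s i = x).

Definition one_generated (A : algebra) : Prop :=
  exists a : A, generated_by (fun x => x = a).

Definition is_free (Eqs : identities) (X : Type) (F : algebra) (eta : X -> F)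
  : Prop :=
  in_var Eqs F /\
  forall B : algebra, in_var Eqs B -> forall v : X -> B,
    (exists h : F -> B, is_hom h /\ forall x, h (eta x) = v x) /\
    (forall h1 h2 : F -> B, is_hom h1 -> is_hom h2 ->
       (forall x, h1 (eta x) = h2 (eta x)) -> forall y, h1 y = h2 y).

Definition projective (Eqs : identities) (P : algebra) : Prop :=
  exists (X : Type) (F : algebra) (eta : X -> F) (i : P -> F) (r : F -> P),
    is_free Eqs eta /\ is_hom i /\ is_hom r /\ forall x, r (i x) = x.

(* Exact: isomorphic to a finitely generated subalgebra of a finitely
   generated free algebra, i.e. finitely generated and embeddable (injective
   homomorphism) into a free algebra on finitely many generators. *)
Definition exact (Eqs : identities) (E : algebra) : Prop :=
  finitely_generated E /\
  exists (n : nat) (F : algebra) (eta : 'I_n -> F) (e : E -> F),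
    is_free Eqs eta /\ is_hom e /\ injective e.

Definition strongly_projective (Eqs : identities) (S0 : algebra) : Prop :=
  projective Eqs S0 /\
  forall (P : algebra) (i : S0 -> P),
    projective Eqs P -> is_hom i -> injective i ->
    exists j : P -> S0, is_hom j /\ forall x, j (i x) = x.

Definition oneESP (Eqs : identities) : Prop :=
  forall A : algebra, one_generated A -> exact Eqs A -> strongly_projective Eqs A.

Definition prod_alg (m : nat) (E : 'I_m -> algebra) : algebra :=
  @Algebra (forall k : 'I_m, E k)
    (fun f args k => @interp (E k) f (fun i => args i k)).

Definition proj (m : nat) (E : 'I_m -> algebra) (k : 'I_m) :
  prod_alg E -> E k := fun x => x k.

(* Algebraic e-generalization problem (F is the free algebra on one
   generator, fixed in the theorem). *)
Definition egen_problem (Eqs : identities) (F : algebra) (m : nat)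
  (E : 'I_m -> algebra) (h : F -> prod_alg E) : Prop :=
  is_hom h /\
  (forall k, one_generated (E k) /\ exact Eqs (E k)) /\
  (forall k (y : E k), exists x, proj k (h x) = y).

Definition solution (Eqs : identities) (F : algebra) (m : nat)
  (E : 'I_m -> algebra) (h : F -> prod_alg E) (P : algebra) (g : F -> P)
  : Prop :=
  is_hom g /\ projective Eqs P /\ finitely_generated P /\
  exists f : P -> prod_alg E, is_hom f /\ forall x, f (g x) = h x.

Definition gen_le (F P P' : algebra) (g : F -> P) (g' : F -> P') : Prop :=
  exists f : P' -> P, is_hom f /\ forall x, f (g' x) = g x.

Definition ker (A B : algebra) (g : A -> B) : A -> A -> Prop :=
  fun x y => g x = g y.

Definition in_G (Eqs : identities) (F : algebra) (m : nat)
  (E : 'I_m -> algebra) (h : F -> prod_alg E) (R : F -> F -> Prop) : Prop :=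
  exists (P : algebra) (g : F -> P),
    solution Eqs h g /\ forall x y, R x y <-> ker g x y.

(* (𝒜(h), ⊑) is dually isomorphic to (𝒢(h), ⊆): there is a map Phi from
   solutions to 𝒢(h), onto 𝒢(h), with  g ⊑ g'  <->  Phi g' ⊆ Phi g.
   (This forces Phi to be constant on ⊑-equivalence classes and injective on
   them, i.e. an order-reversing bijection 𝒜(h) -> 𝒢(h).) *)
Definition dually_isomorphic_AG (Eqs : identities) (F : algebra) (m : nat)
  (E : 'I_m -> algebra) (h : F -> prod_alg E) : Prop :=
  exists Phi : forall P : algebra, (F -> P) -> F -> F -> Prop,
    (forall (P : algebra) (g : F -> P), solution Eqs h g -> in_G Eqs h (Phi P g))
    /\ (forall R, in_G Eqs h R ->
          exists (P : algebra) (g : F -> P),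
            solution Eqs h g /\ forall x y, R x y <-> Phi P g x y)
    /\ (forall (P : algebra) (g : F -> P) (P' : algebra) (g' : F -> P'),
          solution Eqs h g -> solution Eqs h g' ->
          (gen_le g g' <-> forall x y, Phi P' g' x y -> Phi P g x y)).

End UniversalAlgebra.

(* Order solutions by their kernels.  If g ⊑ g' then ker g' ⊆ ker g trivially.
   Conversely, let ker g' ⊆ ker g with g' : F(z) -> P' and P' projective.  The
   image of g' is a 1-generated subalgebra of P'; its generator is a term in
   finitely many free generators of the free algebra of which P' is a retract,
   and the subalgebra they generate is free on them, so the image is exact.
   By 1ESP it is strongly projective, hence a retract j of P'.  Since
   ker g' ⊆ ker g, g factors through the image by some k, and f := k ∘ j
   witnesses g ⊑ g'.  Hence g ↦ ker g is a dual isomorphism. *)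
From Stdlib Require Import ClassicalEpsilon ProofIrrelevance FunctionalExtensionality.
From Stdlib Require List.
From mathcomp Require Import all_boot.
Set Implicit Arguments.
Unset Strict Implicit.
Unset Printing Implicit Defensive.

Lemma In_enum (T : finType) (x : T) : List.In x (enum T).
Proof.
have : x \in enum T by rewrite mem_enum.
elim: (enum T) => [|y s IH] //=; rewrite in_cons => /orP [/eqP ->|/IH]; by [left|right].
Qed.

Section UniversalAlgebra.
Variable S : signature.
Implicit Types A B C F P : algebra S.

Lemma is_hom_comp A B C (f : A -> B) (g : B -> C) :
  is_hom f -> is_hom g -> is_hom (g \o f).
Proof. by move=> Hf Hg o args /=; rewrite Hf Hg. Qed.

Lemma hom_eval A B (h : A -> B) (X : Type) (env : X -> A) (t : term S X) :
  is_hom h -> h (eval env t) = eval (h \o env) t.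
Proof.
move=> Hh; elim: t => [x|o args IH] //=.
by rewrite Hh; f_equal; apply: functional_extensionality.
Qed.

Definition subalg A (U : A -> Prop) (HU : closed_sub U) : algebra S :=
  @Algebra S {x : A | U x}
    (fun o args => exist U (interp (fun i => sval (args i)))
                     (HU o _ (fun i => proj2_sig (args i)))).

Section Subalgebra.
Variables (A : algebra S) (U : A -> Prop) (HU : closed_sub U).

Lemma subalg_val_hom : is_hom (fun x : subalg HU => sval x).
Proof. by []. Qed.

Lemma subalg_val_inj : injective (fun x : subalg HU => sval x).
Proof. by move=> [x Hx] [y Hy] /= Exy; subst y; f_equal; apply: proof_irrelevance. Qed.

Lemma subalg_in_var Eqs : in_var Eqs A -> (exists a, U a) -> in_var Eqs (subalg HU).
Proof.
move=> [_ HA] [a Ua]; split; first by constructor; exact: (exist U a Ua).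
move=> s t Est env; apply: subalg_val_inj.
by rewrite /= !(hom_eval _ _ subalg_val_hom); apply: HA.
Qed.

Variables (B : algebra S) (e : B -> A) (HeU : forall b, U (e b)).

Definition corestr (b : B) : subalg HU := exist U (e b) (HeU b).

Lemma corestr_hom : is_hom e -> is_hom corestr.
Proof. by move=> He o args; apply: subalg_val_inj; apply: He. Qed.

Lemma corestr_inj : injective e -> injective corestr.
Proof. by move=> He b b' /(f_equal sval) /He. Qed.

End Subalgebra.
Arguments subalg_val_hom {A U} HU.
Arguments subalg_val_inj {A U} HU.

Definition gen_sub A (G : A -> Prop) : A -> Prop :=
  fun x => forall V : A -> Prop, closed_sub V -> (forall y, G y -> V y) -> V x.

Lemma gen_sub_closed A (G : A -> Prop) : closed_sub (gen_sub G).
Proof. by move=> o args Hargs V HV HGV; apply: (HV) => i; apply: Hargs. Qed.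
Arguments gen_sub_closed {A} G.

Lemma gen_sub_base A (G : A -> Prop) y : G y -> gen_sub G y.
Proof. by move=> Gy V _ HGV; apply: HGV. Qed.

Lemma gen_subalg_generated A (G : A -> Prop) :
  generated_by (fun y : subalg (gen_sub_closed G) => G (sval y)).
Proof.
move=> V HV HGV [x Hx].
pose W x := gen_sub G x /\ forall Hx : gen_sub G x, V (exist _ x Hx).
suff [_ ] : W x by apply.
apply: Hx => [o args Wargs | y Gy].
- split; first by apply: gen_sub_closed => i; case: (Wargs i).
  move=> Hx; set u := exist _ _ Hx.
  have -> : u = @interp S (subalg (gen_sub_closed G)) o
                  (fun i => exist _ (args i) (Wargs i).1).
    exact: subalg_val_inj.
  by apply: HV => i; apply: (Wargs i).2.
- by split=> [|Hy]; [apply: gen_sub_base | apply: (HGV (exist _ y Hy))].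
Qed.

Fixpoint vars X (t : term S X) : list X :=
  match t with
  | Var x => [:: x]
  | App o args => List.flat_map (fun i => vars (args i)) (enum 'I_(arity o))
  end.

Lemma gen_sub_eval A (G : A -> Prop) X (env : X -> A) (t : term S X) :
  (forall x, List.In x (vars t) -> G (env x)) -> gen_sub G (eval env t).
Proof.
elim: t => [x|o args IH] /= Hvars; first by apply: gen_sub_base; apply: Hvars; left.
apply: gen_sub_closed => i; apply: IH => x Hx; apply: Hvars.
by apply/List.in_flat_map; exists i; split; first exact: In_enum.
Qed.

Lemma vars_enum X (x0 : X) (t : term S X) :
  exists n (v : 'I_n -> X),
    injective v /\ forall x, List.In x (vars t) -> exists k, v k = x.
Proof.
pose dec (x y : X) := excluded_middle_informative (x = y).
pose l := List.nodup dec (vars t).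
exists (List.length l), (fun k => List.nth k l x0); split.
  move=> [i Hi] [j Hj] /= Eij; apply: val_inj => /=.
  by apply: (proj1 (List.NoDup_nth l x0) (List.NoDup_nodup dec _)) Eij; apply/ltP.
move=> x /(List.nodup_In dec) /(List.In_nth _ _ x0) [k [Hk <-]].
by exists (Ordinal (introT ltP Hk)).
Qed.

Definition extend_inj X (T : Type) n (v : 'I_n -> X) (w : 'I_n -> T) (b0 : T) (x : X) : T :=
  match excluded_middle_informative (exists k, v k = x) with
  | left Hx => w (proj1_sig (constructive_indefinite_description _ Hx))
  | right _ => b0
  end.

Lemma extend_injE X (T : Type) n (v : 'I_n -> X) (w : 'I_n -> T) (b0 : T) k :
  injective v -> extend_inj v w b0 (v k) = w k.
Proof.
rewrite /extend_inj => Hv; case: excluded_middle_informative => [Hx|[]]; last by exists k.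
by case: (constructive_indefinite_description _ Hx) => k' /= /Hv ->.
Qed.

Section Free.
Variables (Eqs : identities S) (X : Type) (F : algebra S) (eta : X -> F).
Hypothesis HF : is_free Eqs eta.

Lemma free_generated (U : F -> Prop) :
  closed_sub U -> (forall x, U (eta x)) -> (exists a, U a) -> forall y, U y.
Proof.
move=> HU Ueta Une y.
have [[phi [Hphi phi_eta]] _] :=
  HF.2 _ (subalg_in_var HU HF.1 Une) (fun x => exist U (eta x) (Ueta x)).
have val_phi : forall y, sval (phi y) = y.
  apply: ((HF.2 _ HF.1 eta).2 (sval \o phi) id) => //.
    exact: is_hom_comp Hphi (subalg_val_hom HU).
  by move=> x /=; rewrite phi_eta.
by rewrite -[y]val_phi; apply: proj2_sig.
Qed.

Lemma free_eval_surj (x0 : X) (y : F) : exists t, eval eta t = y.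
Proof.
move: y; apply: (@free_generated (fun y => exists t, eval eta t = y)).
- move=> o args /(choice _) [ts Hts].
  by exists (App ts) => /=; f_equal; apply: functional_extensionality.
- by move=> x; exists (Var S x).
- by exists (eta x0), (Var S x0).
Qed.

Section GeneratedByFinitelyMany.
Variables (n : nat) (v : 'I_n -> X).
Hypothesis v_inj : injective v.

Let G (y : F) := exists k, eta (v k) = y.

Definition gen_free_eta (k : 'I_n) : subalg (gen_sub_closed G) :=
  exist _ (eta (v k)) (gen_sub_base (ex_intro _ k erefl)).

Lemma gen_subalg_free : (exists a, gen_sub G a) -> is_free Eqs gen_free_eta.
Proof.
move=> Gne; split; first exact: subalg_in_var HF.1 Gne.
move=> B HB w; split.
  have [b0] := HB.1.
  have [[phi [Hphi phi_eta]] _] := HF.2 B HB (extend_inj v w b0).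
  exists (phi \o sval); split; first exact: is_hom_comp (subalg_val_hom _) Hphi.
  by move=> k /=; rewrite phi_eta extend_injE.
move=> h1 h2 H1 H2 Heq; apply: (@gen_subalg_generated _ G (fun y => h1 y = h2 y)).
  by move=> o args Hargs; rewrite H1 H2; f_equal; apply: functional_extensionality.
move=> y [k Hk]; have -> : y = gen_free_eta k by apply: subalg_val_inj.
exact: Heq.
Qed.

End GeneratedByFinitelyMany.

Lemma free_ord0 (eta0 : 'I_0 -> F) : (X -> False) -> is_free Eqs eta0.
Proof.
move=> HX; split; first exact: HF.1.
move=> B HB w; have [[phi [Hphi _]] phi_uniq] := HF.2 B HB (fun x => False_rect B (HX x)).
split; first by exists phi; split=> // -[].
by move=> h1 h2 H1 H2 _; apply: phi_uniq => // x; case: (HX x).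
Qed.

Lemma exact_of_embedding_free A (e : A -> F) :
  one_generated A -> is_hom e -> injective e -> exact Eqs A.
Proof.
move=> [a0 Hgen] He e_inj; split.
  exists 1, (fun _ => a0) => V HV HGV.
  by apply: Hgen => // x ->; apply: HGV; exists ord0.
(* With no variables (and possibly no constants) F need not be generated by
   term values, but it is then itself free on 'I_0. *)
case: (classic (inhabited X)) => [[x0]|HX]; last first.
  exists 0, F, (fun _ => e a0), e; split=> //.
  by apply: free_ord0 => x; apply: HX.
have [t Ht] := free_eval_surj x0 (e a0).
have [n [v [v_inj Hv]]] := vars_enum x0 t.
pose G y := exists k, eta (v k) = y.
have eG : forall a, gen_sub G (e a).
  apply: Hgen => [o args Hargs | a ->]; first by rewrite He; apply: gen_sub_closed.
  by rewrite -Ht; apply: gen_sub_eval => x /Hv [k <-]; exists k.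
exists n, (subalg (gen_sub_closed G)), (gen_free_eta v), (corestr (gen_sub_closed G) eG).
split; first by apply: gen_subalg_free => //; exists (e a0).
by split; [apply: corestr_hom | apply: corestr_inj].
Qed.

End Free.

Lemma exact_of_embedding_projective Eqs A P (e : A -> P) :
  projective Eqs P -> one_generated A -> is_hom e -> injective e -> exact Eqs A.
Proof.
move=> [X [F [eta [i [r [HF [Hi [Hr ri]]]]]]]] A1 He e_inj.
apply: (exact_of_embedding_free HF (e := i \o e)) => //; first exact: is_hom_comp.
by move=> a b /(f_equal r) /=; rewrite !ri => /e_inj.
Qed.

Lemma free_one_generated Eqs F (z : F) :
  is_free Eqs (fun _ : unit => z) -> one_generated F.
Proof.
move=> HF; exists z => V HV /(_ z erefl) Vz.
by apply: (free_generated HF HV) => [_|]; last exists z.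
Qed.

Section Image.
Variables (A B : algebra S) (g : A -> B).
Hypothesis Hg : is_hom g.

Definition in_image (b : B) : Prop := exists a, g a = b.

Lemma image_closed : closed_sub in_image.
Proof.
move=> o args /(choice _) [xs Hxs]; exists (interp xs).
by rewrite Hg; f_equal; apply: functional_extensionality.
Qed.

Definition image_alg := subalg image_closed.

Definition to_image : A -> image_alg :=
  @corestr _ _ image_closed _ g (fun a => ex_intro _ a erefl).

Lemma to_image_hom : is_hom to_image.
Proof. exact: corestr_hom. Qed.

Lemma to_image_surj (b : image_alg) : exists a, to_image a = b.
Proof. by case: b => b [a Ea]; exists a; apply: subalg_val_inj. Qed.

Lemma image_one_generated : one_generated A -> one_generated image_alg.
Proof.
move=> [a0 Hgen]; exists (to_image a0) => V HV /(_ _ erefl) Va0 b.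
have [a <-] := to_image_surj b.
apply: (Hgen (fun a => V (to_image a))) => [o args Hargs | _ ->] //.
by rewrite to_image_hom; apply: HV.
Qed.

Lemma image_factor C (g2 : A -> C) :
  is_hom g2 -> (forall x y, g x = g y -> g2 x = g2 y) ->
  exists k : image_alg -> C, is_hom k /\ forall a, k (to_image a) = g2 a.
Proof.
move=> Hg2 ker_le.
have [s Hs] := choice (fun (b : image_alg) a => g a = sval b) (fun b => proj2_sig b).
exists (g2 \o s); split=> [o args | a] /=; last by apply: ker_le; rewrite Hs.
rewrite -Hg2; apply: ker_le; rewrite Hs Hg /=.
by f_equal; apply: functional_extensionality => i; rewrite Hs.
Qed.

End Image.

Lemma gen_le_of_ker_sub Eqs F (z : F) P (P' : algebra S) (g : F -> P) (g' : F -> P') :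
  is_free Eqs (fun _ : unit => z) -> oneESP Eqs ->
  is_hom g -> is_hom g' -> projective Eqs P' ->
  (forall x y, g' x = g' y -> g x = g y) -> gen_le g g'.
Proof.
move=> HF HV Hg Hg' HP' ker_le.
have im1 := image_one_generated Hg' (free_one_generated HF).
have val_hom := subalg_val_hom (image_closed Hg').
have val_inj := subalg_val_inj (image_closed Hg').
have [_ im_retract] := HV _ im1 (exact_of_embedding_projective HP' im1 val_hom val_inj).
have [j [Hj j_val]] := im_retract P' _ HP' val_hom val_inj.
have [k [Hk k_g]] := image_factor Hg' Hg ker_le.
exists (k \o j); split=> [|x /=]; first exact: is_hom_comp.
by rewrite -(k_g x) -(j_val (to_image Hg' x)).
Qed.

End UniversalAlgebra.

Theorem theorem4p19 (S : signature) (Eqs : identities S)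
  (F : algebra S) (z : F) (HF : is_free Eqs (fun _ : unit => z))
  (HV : oneESP Eqs)
  (m : nat) (Hm : 0 < m) (E : 'I_m -> algebra S) (h : F -> prod_alg E)
  (Hh : egen_problem Eqs h) :
  dually_isomorphic_AG Eqs h.
Proof.
exists (fun P g => @ker S F P g); split; [|split].
- by move=> P g sol_g; exists P, g.
- by move=> R [P [g [sol_g HR]]]; exists P, g.
- move=> P g P' g' [Hg _] [Hg' [HP' _]]; split.
  + by move=> [f [_ Hf]] x y; rewrite /ker -!Hf => ->.
  + exact: gen_le_of_ker_sub HF HV Hg Hg' HP'.
Qed.
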